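(* Consider a combinatorial auction with $2$ bidders and $2$ items $a,b$, where both bidders have monotone subadditive valuations. Let $\mathcal M_2$ be the randomized mechanism that selects a bidder $i$ uniformly at random and an item $j$ uniformly at random, allocates item $j$ to bidder $i$, and then runs an ascending second-price auction for the remaining item among both bidders. Then $\mathcal M_2$ achieves a $\frac{4}{3}$-approximation to the optimal social welfare: on every instance its expected welfare under truthful play is at least $\frac34\mathrm{OPT}$.
   Context: A valuation $v:2^{\{a,b\}}\to\mathbb{R}_{\ge0}$ is monotone if $v(T)\le v(T')$ whenever $T\subseteq T'$, and subadditive if $v(T\cup T')\le v(T)+v(T')$ for all $T,T'$. In the auction for the remaining item, each bidder bids her marginal value for that item given the bundle she already holds; the highest bidder wins. $\mathrm{OPT}$ is the maximum of $v_1(T_1)+v_2(T_2)$ over disjoint $T_1,T_2\subseteq\{a,b\}$. *)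

(* Two bidders ('I_2) and two items ('I_2: item 0 = a, item 1 = b). *)
From mathcomp Require Import all_boot all_order all_algebra.
Set Implicit Arguments. Unset Strict Implicit. Unset Printing Implicit Defensive.
Import Order.TTheory GRing.Theory Num.Theory.
Local Open Scope ring_scope.

Definition bidder := 'I_2.
Definition item := 'I_2.

Definition other (x : 'I_2) : 'I_2 := if x == ord0 then ord_max else ord0.

Section Defs.
Variable R : realFieldType.

Definition nonneg_val (v : {set item} -> R) := forall T, 0 <= v T.
Definition monotone_val (v : {set item} -> R) :=
  forall T T' : {set item}, T \subset T' -> v T <= v T'.
Definition subadditive_val (v : {set item} -> R) :=
  forall T T' : {set item}, v (T :|: T') <= v T + v T'.

(* OPT = max over disjoint (T1, T2) of v1 T1 + v2 T2
   (values are nonnegative, so the neutral element 0 of the max is harmless). *)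
Definition OPT (v : bidder -> {set item} -> R) : R :=
  \big[Num.max/0]_(p : {set item} * {set item} | [disjoint p.1 & p.2])
     (v ord0 p.1 + v ord_max p.2).

(* Outcome of M_2 when bidder i receives item j, under truthful play:
   in the (ascending second-price) auction for the remaining item j' = other j,
   bidder i bids v_i({j,j'}) - v_i({j}) and bidder k = other i bids
   v_k({j'}) - v_k(∅); the highest bidder wins. *)
Definition M2_welfare (v : bidder -> {set item} -> R) (tb : bool)
    (i : bidder) (j : item) : R :=
  let k := other i in
  let j' := other j in
  let bid_i := v i [set j; j'] - v i [set j] in
  let bid_k := v k [set j'] - v k set0 in
  let i_wins := (bid_k < bid_i) || ((bid_i == bid_k) && tb) in
  if i_wins then v i [set j; j'] + v k set0
  else v i [set j] + v k [set j'].

(* Expected welfare: i and j independently uniform on {0,1}. *)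
Definition M2_expected_welfare (v : bidder -> {set item} -> R)
    (tb : bidder -> item -> bool) : R :=
  (1 / 4) * \sum_(i : bidder) \sum_(j : item) M2_welfare v (tb i j) i j.

End Defs.

(* Truthful bidding in the ascending auction for the remaining item makes the
   higher of the two possible allocations win, so when bidder i receives item j
   the welfare is max(P_i, S_ij), where P_i gives both items to i and S_ij
   gives j to i and the other item to the other bidder.  Among the four
   candidates P_0, P_1, A = S_00, B = S_01, which dominate every allocation by
   monotonicity, monotonicity gives A, B <= P_0 + P_1 and subadditivity gives
   P_0, P_1 <= A + B.  If, say, P_0 is the largest candidate, then the four
   outcomes sum to at least P_0 + P_0 + A + B >= 3 P_0, i.e. the expected
   welfare is at least 3/4 OPT. *)
From mathcomp Require Import all_boot all_order all_algebra.
From mathcomp Require Import lra.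

Set Implicit Arguments.
Unset Strict Implicit.
Unset Printing Implicit Defensive.
Import Order.TTheory GRing.Theory Num.Theory.
Local Open Scope ring_scope.

Lemma ord2_eq_or_other (x z : 'I_2) : z = x \/ z = other x.
Proof.
case: x z => [[|[|?]] ?] [[|[|?]] ?] //;
  [left|right|right|left]; exact: val_inj.
Qed.

Lemma otherK : involutive other.
Proof. by move=> x; case: (ord2_eq_or_other ord0 x) => ->. Qed.

Lemma setT_I2 (j : 'I_2) : [set j; other j] = setT.
Proof.
apply/setP => z; rewrite !inE.
by case: (ord2_eq_or_other j z) => ->; rewrite eqxx ?orbT.
Qed.

Lemma disjoint_I2 (T1 T2 : {set 'I_2}) : [disjoint T1 & T2] ->
  T1 = set0 \/ T2 = set0 \/
  exists j, T1 \subset [set j] /\ T2 \subset [set other j].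
Proof.
move=> dis.
have [->|[x xT1]] := set_0Vmem T1; first by left.
have [->|[y yT2]] := set_0Vmem T2; first by right; left.
have y_other : y = other x.
  case: (ord2_eq_or_other x y) => // y_x.
  by move: (disjointFr dis xT1); rewrite -y_x => /negbT/negP.
right; right; exists x; split; apply/subsetP => z zT; rewrite inE.
- case: (ord2_eq_or_other x z) => [-> // | z_other].
  by move: (disjointFr dis zT); rewrite z_other -y_other => /negbT/negP.
- case: (ord2_eq_or_other x z) => [z_x | -> //].
  by move: (disjointFl dis zT); rewrite z_x => /negbT/negP.
Qed.

(* The bids are X - Y and U - V; on a tie both outcomes have equal welfare,
   so the tie-breaking rule is irrelevant. *)
Lemma auction_outcome_max (R : realDomainType) (X Y U V : R) (tb : bool) :
  (if (U - V < X - Y) || ((X - Y == U - V) && tb) then X + V else Y + U)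
  = Num.max (X + V) (Y + U).
Proof.
have [lt_bids|] := ltrP (U - V) (X - Y); first by rewrite max_l //; lra.
case: eqP => [eq_bids|ne_bids] le_bids /=.
  by case: tb; rewrite max_l //; lra.
by rewrite max_r //; lra.
Qed.

Lemma cross_max_ge (R : realDomainType) (p q a b : R) :
  a <= p + q -> b <= p + q -> p <= a + b -> q <= a + b ->
  let S := Num.max p a + Num.max p b + Num.max q a + Num.max q b in
  [/\ 3 * p <= S, 3 * q <= S, 3 * a <= S & 3 * b <= S].
Proof.
move=> a_le b_le p_le q_le S.
have max_ge (x y : R) : x <= Num.max x y /\ y <= Num.max x y.
  by rewrite !le_max !lexx orbT.
have [? ?] := max_ge p a; have [? ?] := max_ge p b.
have [? ?] := max_ge q a; have [? ?] := max_ge q b.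
by split; rewrite /S; lra.
Qed.

Section Welfare.
Variables (R : realFieldType) (v : bidder -> {set item} -> R).
Implicit Types (i : bidder) (j : item).

Definition bundle_welfare i : R := v i setT + v (other i) set0.

Definition split_welfare i j : R := v i [set j] + v (other i) [set other j].

Lemma M2_welfareE tb i j :
  M2_welfare v tb i j = Num.max (bundle_welfare i) (split_welfare i j).
Proof. by rewrite /M2_welfare auction_outcome_max setT_I2. Qed.

Lemma split_welfare_other i j :
  split_welfare (other i) (other j) = split_welfare i j.
Proof. by rewrite /split_welfare !otherK addrC. Qed.

Lemma M2_expected_welfareE tb :
  M2_expected_welfare v tb = 1 / 4 *
    (Num.max (bundle_welfare ord0) (split_welfare ord0 ord0)
   + Num.max (bundle_welfare ord0) (split_welfare ord0 ord_max)
   + Num.max (bundle_welfare ord_max) (split_welfare ord0 ord0)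
   + Num.max (bundle_welfare ord_max) (split_welfare ord0 ord_max)).
Proof.
rewrite /M2_expected_welfare !big_ord_recl !big_ord0 !addr0.
have -> : lift ord0 ord0 = ord_max :> 'I_2 by apply: val_inj.
rewrite !M2_welfareE.
rewrite [split_welfare ord_max ord0](split_welfare_other ord0 ord_max).
rewrite [split_welfare ord_max ord_max](split_welfare_other ord0 ord0).
by rewrite [X in _ + X]addrC addrA.
Qed.

Hypothesis v_ge0 : forall b, nonneg_val (v b).
Hypothesis v_mono : forall b, monotone_val (v b).

Lemma split_le_bundles i j :
  split_welfare i j <= bundle_welfare i + bundle_welfare (other i).
Proof.
rewrite /bundle_welfare otherK.
have vi_le := v_mono i (subsetT [set j]).
have vk_le := v_mono (other i) (subsetT [set other j]).
have := v_ge0 i set0; have := v_ge0 (other i) set0.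
rewrite /split_welfare; lra.
Qed.

Lemma bundle_le_splits (v_sub : forall b, subadditive_val (v b)) i j :
  bundle_welfare i <= split_welfare i j + split_welfare i (other j).
Proof.
rewrite /bundle_welfare /split_welfare otherK -(setT_I2 j).
have vi_le := v_sub i [set j] [set other j].
have vk_le := v_mono (other i) (sub0set [set j]).
have := v_ge0 (other i) [set other j].
lra.
Qed.

Lemma OPT_le (M : R) :
  bundle_welfare ord0 <= M -> bundle_welfare ord_max <= M ->
  split_welfare ord0 ord0 <= M -> split_welfare ord0 ord_max <= M ->
  OPT v <= M.
Proof.
move=> P_le Q_le A_le B_le.
have M_ge0 : 0 <= M by apply: le_trans A_le; apply: addr_ge0; apply: v_ge0.
rewrite /OPT; apply: (big_ind (fun x => x <= M)) => //.
  by move=> x y x_le y_le; rewrite ge_max x_le y_le.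
case=> T1 T2 /= dis.
have [->|[->|[j [sub1 sub2]]]] := disjoint_I2 dis.
- by apply: le_trans Q_le; rewrite addrC lerD // v_mono // subsetT.
- by apply: le_trans P_le; rewrite lerD // v_mono // subsetT.
- apply: (@le_trans _ _ (split_welfare ord0 j)); first by rewrite lerD ?v_mono.
  by case: (ord2_eq_or_other ord0 j) => ->.
Qed.

End Welfare.

Theorem claimB3 (R : realFieldType) (v : bidder -> {set item} -> R)
  (tb : bidder -> item -> bool) :
  (forall b, nonneg_val (v b)) ->
  (forall b, monotone_val (v b)) ->
  (forall b, subadditive_val (v b)) ->
  M2_expected_welfare v tb >= (3 / 4) * OPT v.
Proof.
move=> v_ge0 v_mono v_sub.
have Q_le : bundle_welfare v ord_max <=
    split_welfare v ord0 ord0 + split_welfare v ord0 ord_max.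
  rewrite (split_welfare_other v ord_max ord_max).
  rewrite (split_welfare_other v ord_max ord0).
  exact: bundle_le_splits.
have [P3 Q3 A3 B3] := cross_max_ge (split_le_bundles v_ge0 v_mono ord0 ord0)
  (split_le_bundles v_ge0 v_mono ord0 ord_max)
  (bundle_le_splits v_ge0 v_mono v_sub ord0 ord0) Q_le.
rewrite M2_expected_welfareE.
set S := _ + _ + _ + _ in P3 Q3 A3 B3 *.
have : OPT v <= S / 3 by apply: OPT_le => //; lra.
lra.
Qed.
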